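(* Let $M$ be a $2\times2$ quaternionic matrix and $A\in SL_2\mathcal{V}$. Then $\mathrm{pdet}(AM)=\mathrm{pdet}(M)$.
   Context: For $q=a+bi+cj+dk\in\mathbb{H}$, $q^*=a+bi+cj-dk$. $\mathcal{V}=\mathrm{span}_\mathbb{R}\{1,i,j\}$. For a quaternionic matrix $\begin{pmatrix}a&b\\c&d\end{pmatrix}$, $\mathrm{pdet}=a^*d-c^*b$. $SL_2\mathcal{V}$ is the set of quaternionic matrices $\begin{pmatrix}a&b\\c&d\end{pmatrix}$ with $ab^*,cd^*,c^*a,d^*b,ba^*,dc^*,a^*c,b^*d\in\mathcal{V}$ and $ad^*-bc^*=da^*-cb^*=d^*a-b^*c=a^*d-c^*b=1$. *)

From mathcomp Require Import all_boot all_order all_algebra.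
From mathcomp Require Import reals.
Set Implicit Arguments. Unset Strict Implicit. Unset Printing Implicit Defensive.
Import GRing.Theory Num.Theory.
Local Open Scope ring_scope.

(* q = q0 + q1 i + q2 j + q3 k *)
Record quat (R : realType) := Quat { q0 : R; q1 : R; q2 : R; q3 : R }.

Section Quat.
Variable R : realType.
Implicit Types p q : quat R.

Definition qone : quat R := Quat 1 0 0 0.
Definition qadd p q : quat R :=
  Quat (q0 p + q0 q) (q1 p + q1 q) (q2 p + q2 q) (q3 p + q3 q).
Definition qopp q : quat R := Quat (- q0 q) (- q1 q) (- q2 q) (- q3 q).
Definition qsub p q : quat R := qadd p (qopp q).
(* Hamilton product: i^2 = j^2 = k^2 = ijk = -1 *)
Definition qmul p q : quat R :=
  Quat (q0 p * q0 q - q1 p * q1 q - q2 p * q2 q - q3 p * q3 q)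
       (q0 p * q1 q + q1 p * q0 q + q2 p * q3 q - q3 p * q2 q)
       (q0 p * q2 q - q1 p * q3 q + q2 p * q0 q + q3 p * q1 q)
       (q0 p * q3 q + q1 p * q2 q - q2 p * q1 q + q3 p * q0 q).
Definition qstar q : quat R := Quat (q0 q) (q1 q) (q2 q) (- q3 q).
Definition inV q : Prop := q3 q = 0.
End Quat.

Record mat2 (R : realType) := Mat2 { ma : quat R; mb : quat R; mc : quat R; md : quat R }.

Section Mat2.
Variable R : realType.
Implicit Types A M : mat2 R.

Definition mmul A M : mat2 R :=
  Mat2 (qadd (qmul (ma A) (ma M)) (qmul (mb A) (mc M)))
       (qadd (qmul (ma A) (mb M)) (qmul (mb A) (md M)))
       (qadd (qmul (mc A) (ma M)) (qmul (md A) (mc M)))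
       (qadd (qmul (mc A) (mb M)) (qmul (md A) (md M))).

Definition pdet M : quat R :=
  qsub (qmul (qstar (ma M)) (md M)) (qmul (qstar (mc M)) (mb M)).

Definition SL2V A : Prop :=
  let a := ma A in let b := mb A in let c := mc A in let d := md A in
  (inV (qmul a (qstar b)) /\ inV (qmul c (qstar d)) /\ inV (qmul (qstar c) a) /\
   inV (qmul (qstar d) b) /\ inV (qmul b (qstar a)) /\ inV (qmul d (qstar c)) /\
   inV (qmul (qstar a) c) /\ inV (qmul (qstar b) d)) /\
  (qsub (qmul a (qstar d)) (qmul b (qstar c)) = qone R /\
   qsub (qmul d (qstar a)) (qmul c (qstar b)) = qone R /\
   qsub (qmul (qstar d) a) (qmul (qstar b) c) = qone R /\
   qsub (qmul (qstar a) d) (qmul (qstar c) b) = qone R).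
End Mat2.

From HB Require Import structures.
From mathcomp Require Import all_boot all_order all_algebra.
From mathcomp Require Import reals.
From mathcomp Require Import ring.

Set Implicit Arguments.
Unset Strict Implicit.
Unset Printing Implicit Defensive.

Import GRing.Theory.
Local Open Scope ring_scope.

(* Writing [sform a b c d] for pdet [[a, b], [c, d]] = a^* d - c^* b, this is
   the form w(u, v) = u1^* v2 - u2^* v1 on the columns u = (a, c), v = (b, d).
   As q |-> q^* is an anti-involution of H (conjugation by k composed with the
   usual conjugation), w is sesquilinear: w(u p, v q) = p^* w(u, v) q.  Since
   ^* fixes V, the conditions a^* c, b^* d \in V give w(A1, A1) = w(A2, A2) = 0
   for the columns A1, A2 of A, and a^* d - c^* b = 1 gives w(A1, A2) = 1,
   whence w(A2, A1) = -1^* = -1.  Expanding w(A M1, A M2) leaves w(M1, M2). *)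

Section AntiInvolution.
Variables (K : pzRingType) (star : {additive K -> K}).
Hypothesis starM : {morph star : x y / x * y >-> y * x}.
Hypothesis starK : involutive star.

Lemma star1 : star 1 = 1.
Proof.
have -> : star 1 = star 1 * star (star 1) by rewrite starK mulr1.
by rewrite -starM mulr1 starK.
Qed.

Definition sform (a b c d : K) : K := star a * d - star c * b.

Lemma sform_mul a b c d m11 m12 m21 m22 :
  sform (a * m11 + b * m21) (a * m12 + b * m22)
        (c * m11 + d * m21) (c * m12 + d * m22) =
  star m11 * sform a a c c * m12 + star m11 * sform a b c d * m22
  + (star m21 * sform b a d c * m12 + star m21 * sform b b d d * m22).
Proof.
rewrite /sform !raddfD !starM !(mulrDl, mulrDr, mulrN, mulNr) !mulrA.
by rewrite opprD addrACA; congr (_ + _); rewrite opprD addrACA.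
Qed.

Lemma sform_diag a c : star (star a * c) = star a * c -> sform a a c c = 0.
Proof. by move=> Hac; rewrite /sform -Hac starM starK subrr. Qed.

Lemma sform_swap a b c d : sform b a d c = - star (sform a b c d).
Proof. by rewrite /sform raddfB !starM !starK opprB. Qed.

Lemma sform_mul_preserved a b c d m11 m12 m21 m22 :
  star (star a * c) = star a * c -> star (star b * d) = star b * d ->
  sform a b c d = 1 ->
  sform (a * m11 + b * m21) (a * m12 + b * m22)
        (c * m11 + d * m21) (c * m12 + d * m22) = sform m11 m12 m21 m22.
Proof.
move=> Hac Hbd detA.
rewrite sform_mul (sform_swap a b c d) detA star1 !sform_diag //.
by rewrite !mulr0 !mul0r addr0 add0r mulr1 mulrN1 mulNr.
Qed.

End AntiInvolution.

Section QuatRing.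
Variable R : realType.
Implicit Types p q : quat R.

Lemma quat_eq p q :
  q0 p = q0 q -> q1 p = q1 q -> q2 p = q2 q -> q3 p = q3 q -> p = q.
Proof. by case: p; case: q => /= ? ? ? ? ? ? ? ? -> -> -> ->. Qed.

Local Ltac quat_ring :=
  repeat intro; repeat match goal with q : quat _ |- _ => destruct q end;
  apply: quat_eq => /=; ring.

Definition quat_tuple q : R * R * R * R := (q0 q, q1 q, q2 q, q3 q).
Definition tuple_quat (t : R * R * R * R) : quat R :=
  let: (a, b, c, d) := t in Quat a b c d.
Lemma quat_tupleK : cancel quat_tuple tuple_quat. Proof. by case. Qed.

HB.instance Definition _ := Choice.copy (quat R) (can_type quat_tupleK).

Definition qzero : quat R := Quat 0 0 0 0.

Lemma qaddA : associative (@qadd R). Proof. quat_ring. Qed.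
Lemma qaddC : commutative (@qadd R). Proof. quat_ring. Qed.
Lemma qadd0q : left_id qzero (@qadd R). Proof. quat_ring. Qed.
Lemma qaddNq : left_inverse qzero (@qopp R) (@qadd R). Proof. quat_ring. Qed.
Lemma qmulA : associative (@qmul R). Proof. quat_ring. Qed.
Lemma qmul1q : left_id (qone R) (@qmul R). Proof. quat_ring. Qed.
Lemma qmulq1 : right_id (qone R) (@qmul R). Proof. quat_ring. Qed.
Lemma qmulDl : left_distributive (@qmul R) (@qadd R). Proof. quat_ring. Qed.
Lemma qmulDr : right_distributive (@qmul R) (@qadd R). Proof. quat_ring. Qed.

HB.instance Definition _ := GRing.isPzRing.Build (quat R)
  qaddA qaddC qadd0q qaddNq qmulA qmul1q qmulq1 qmulDl qmulDr.

Lemma qstarB : {morph @qstar R : p q / p - q}. Proof. quat_ring. Qed.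

HB.instance Definition _ :=
  GRing.isZmodMorphism.Build (quat R) (quat R) (@qstar R) qstarB.

Lemma qstarM : {morph @qstar R : p q / p * q >-> q * p}. Proof. quat_ring. Qed.
Lemma qstarK : involutive (@qstar R). Proof. quat_ring. Qed.

Lemma inV_qstar q : inV q -> qstar q = q.
Proof. by case: q => a b c d; rewrite /inV /qstar /= => ->; rewrite oppr0. Qed.

End QuatRing.

Theorem lemma3p20 (R : realType) (A M : mat2 R) :
  SL2V A -> pdet (mmul A M) = pdet M.
Proof.
case: A => a b c d; case: M => m11 m12 m21 m22.
move=> /= [[_ [_ [_ [_ [_ [_ [Vac Vbd]]]]]]] [_ [_ [_ detA]]]].
exact: (@sform_mul_preserved _ _ (@qstarM R) (@qstarK R) a b c d m11 m12 m21 m22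
         (inV_qstar Vac) (inV_qstar Vbd) detA).
Qed.
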